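(* Let $\lambda\in\Lambda^{\bullet}(n,r)$ and $A\in\mathrm{cb}(\lambda)$. Then: (1) there exist indices $1\le i_1,\dots,i_l\le n-1$ with $e_{i_1}e_{i_2}\cdots e_{i_l}\cdot\overline{e_A}=\overline{k_\lambda}$ in $S_\lambda$; (2) for indices $1\le i_1,\dots,i_l\le n-1$, the identity $e_{i_1}e_{i_2}\cdots e_{i_l}\cdot\overline{e_A}=\overline{k_\lambda}$ holds if and only if $\overline{e_A}=f_{i_l}\cdots f_{i_2}f_{i_1}\cdot\overline{k_\lambda}$; (3) if $\overline{e_A}=f_{i_l}\cdots f_{i_1}\cdot\overline{k_\lambda}=f_{j_s}\cdots f_{j_1}\cdot\overline{k_\lambda}$, then the multisets $\{i_1,\dots,i_l\}$ and $\{j_1,\dots,j_s\}$ are equal; in particular $l=s$.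
   Context: Setting: $n,r\ge 0$; $\Lambda(n,r)$, $\Lambda^\bullet(n,r)$, $M_n(r)$, $\mathrm{ro}$, $\mathrm{co}$, $E_{a,b}$, $D_\lambda$ as usual. $\mathbf{S}_0(n,r)=S_0(n,r)\otimes_{\mathbb Z}\mathbb C$ is the complex $0$-Schur algebra (the $q=0$ specialization of the Dipper–James $q$-Schur algebra). It has the Jensen–Su standard basis $\{e_A:A\in M_n(r)\}$ with: - $e_Ae_B=0$ unless $\mathrm{co}(A)=\mathrm{ro}(B)$, in which case $e_Ae_B=e_C$ for a unique $C$. - $k_\lambda:=e_{D_\lambda}$ satisfies $k_\lambda e_A=\delta_{\lambda,\mathrm{ro}(A)}e_A$ and $e_Ak_\lambda=\delta_{\lambda,\mathrm{co}(A)}e_A$. - $e_i=\sum_\lambda e_{D_\lambda-E_{i+1,i+1}+E_{i,i+1}}$ and $f_i=\sum_\lambda e_{D_\lambda-E_{i,i}+E_{i+1,i}}$ for $1\le i\le n-1$ (sums over $\lambda$ giving nonnegative matrices). - If $\mathrm{ro}(A)=\lambda$: $e_ie_A=e_{A+E_{i,p}-E_{i+1,p}}$ when $\lambda_{i+1}>0$, where $p$ is the largest $j$ with $a_{i+1,j}>0$, and $e_ie_A=0$ otherwise. - $f_ie_A=e_{A-E_{i,q}+E_{i+1,q}}$ when $\lambda_i>0$, where $q$ is the smallest $j$ with $a_{i,j}>0$, and $f_ie_A=0$ otherwise. $P_\lambda$: for a strong composition $\alpha=(\alpha_1,\dots,\alpha_s)$ of $n$, cut $\lambda$ into consecutive pieces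 of lengths $\alpha_1,\dots,\alpha_s$. $\alpha\in\max(\lambda)$ if each piece is $(0)$ or has nonzero first and last entries. $A(\alpha;v)$ keeps the columns of $A$ with indices in the $v$-th block and zeroes the others. A matrix is open if $a_{i,j}a_{i',j'}=0$ for all $i<i'$, $j<j'$. $A$ is open on columns w.r.t. $\alpha$ if every $A(\alpha;v)$ is open. $B^{\lambda,\alpha}=\{e_A:\mathrm{co}(A)=\lambda, A\text{ open on columns w.r.t. }\alpha\}$, and $B^\lambda=\{e_A:\mathrm{co}(A)=\lambda\}\setminus\bigcup_{\alpha\in\max(\lambda)\setminus\{(1^n)\}}B^{\lambda,\alpha}$. $P_\lambda=\mathbb C B^\lambda$, with $b\cdot e_A=e_B$ if $be_A=e_B$ in $S_0(n,r)$ and $e_B\in B^\lambda$, and $0$ otherwise, for $b\in\{e_i,f_i,k_\mu\}$. Column block diagonal matrix: $a_{i,j}>0\Rightarrow a_{i',s}=0$ for all $i'\le i$, $s>j$. $\mathrm{cb}(\lambda)$ is the set of such $n\times n$ matrices with $\mathrm{co}(A)=\lambda$, and $\beta^\lambda=\{e_A:A\in\mathrm{cb}(\lambda)\}\subseteq B^\lambda$. The span $N_\lambda$ of $B^\lambda\setminus\beta^\lambda$ is a submodule of $P_\lambda$. Set $S_\lambda=P_\lambda/N_\lambda$, with basis $\overline{e_A}=e_A+N_\lambda$ for $A\in\mathrm{cb}(\lambda)$; note $k_\lambda\in\beta^\lambda$. *)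

From mathcomp Require Import all_boot all_algebra.
Set Implicit Arguments. Unset Strict Implicit. Unset Printing Implicit Defensive.

Section ZeroSchur.
Variable n : nat.

(* An n x n matrix with nonnegative integer entries; rows/columns are
   0-based ordinals: paper's row k (1-based) is ordinal k-1. *)
Notation mat := 'M[nat]_n.

Definition ncomp := {ffun 'I_n -> nat}.

Definition in_Lambda (r : nat) (lam : ncomp) : Prop := \sum_(i < n) lam i = r.

Definition in_Lambda_bullet (r : nat) (lam : ncomp) : Prop :=
  in_Lambda r lam /\ forall i j : 'I_n, i <= j -> lam i = 0 -> lam j = 0.

Definition ro (A : mat) : ncomp := [ffun i => \sum_(j < n) A i j].
Definition co (A : mat) : ncomp := [ffun j => \sum_(i < n) A i j].

Definition Dmat (lam : ncomp) : mat := (\matrix_(i, j) (if i == j then lam i else 0)%N)%R.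

Definition col_block_diag (A : mat) : bool :=
  [forall i : 'I_n, forall j : 'I_n, (0 < A i j) ==>
     [forall i' : 'I_n, forall s : 'I_n, ((i' <= i) && (j < s)) ==> (A i' s == 0)]].

Definition in_cb (lam : ncomp) (A : mat) : bool := col_block_diag A && (co A == lam).

(* entry of A in the row with 0-based nat index k (0 if k >= n) *)
Definition rowent (A : mat) (k : nat) (j : 'I_n) : nat :=
  \sum_(a < n | (a : nat) == k) A a j.
Definition rowsum (A : mat) (k : nat) : nat := \sum_(j < n) rowent A k j.

(* e_i e_A in S_0(n,r), for 1 <= i <= n-1 (paper's indexing);
   None stands for 0.  Paper rows i, i+1 are 0-based rows i-1, i. *)
Definition e_step (i : nat) (A : mat) : option mat :=
  if 0 < rowsum A i then
    let p := \max_(j < n | 0 < rowent A i j) (j : nat) in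
    Some (\matrix_(a, b)
            (if (b : nat) == p then
               (if (a : nat) == i.-1 then A a b + 1
                else if (a : nat) == i then A a b - 1 else A a b)
             else A a b)%N)%R
  else None.

Definition f_step (i : nat) (A : mat) : option mat :=
  if 0 < rowsum A i.-1 then
    let q := \big[minn/n]_(j < n | 0 < rowent A i.-1 j) (j : nat) in
    Some (\matrix_(a, b)
            (if (b : nat) == q then
               (if (a : nat) == i.-1 then A a b - 1
                else if (a : nat) == i then A a b + 1 else A a b)
             else A a b)%N)%R
  else None.

(* Elements of S_lambda of the form 0 or a basis vector \bar{e_A}
   (A in cb(lambda)): None = 0, Some A = \bar{e_A}.  This set is stable
   under e_i, f_i.  b . \bar{e_A} = \bar{e_B} if b e_A = e_B in S_0(n,r)
   and B in cb(lambda) (recall beta^lambda is contained in B^lambda, and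
   B^lambda \ beta^lambda spans N_lambda), and 0 otherwise. *)
Definition Svec := option mat.

Definition S_act (lam : ncomp) (step : mat -> option mat) (x : Svec) : Svec :=
  match x with
  | None => None
  | Some A => match step A with
              | Some B => if in_cb lam B then Some B else None
              | None => None
              end
  end.

Definition act_e (lam : ncomp) (i : nat) : Svec -> Svec := S_act lam (e_step i).
Definition act_f (lam : ncomp) (i : nat) : Svec -> Svec := S_act lam (f_step i).

Definition ebar (A : mat) : Svec := Some A.
Definition kbar (lam : ncomp) : Svec := Some (Dmat lam).

(* e_{i_1} e_{i_2} ... e_{i_l} . x   for s = [:: i_1; ...; i_l] *)
Definition act_es (lam : ncomp) (s : seq nat) (x : Svec) : Svec :=
  foldr (act_e lam) x s.

(* f_{i_l} ... f_{i_2} f_{i_1} . x   for s = [:: i_1; ...; i_l] *)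
Definition act_fs_rev (lam : ncomp) (s : seq nat) (x : Svec) : Svec :=
  foldl (fun y i => act_f lam i y) x s.

Definition good_indices (s : seq nat) : bool := all (fun i => (0 < i) && (i < n)) s.

End ZeroSchur.

From mathcomp Require Import all_boot all_algebra.
From mathcomp Require Import zify.
Set Implicit Arguments. Unset Strict Implicit. Unset Printing Implicit Defensive.

(* On a column block diagonal matrix every row has at most one nonzero entry,
   and the columns of these entries weakly increase down the rows.  So e_i
   (resp. f_i) moves one unit of that entry, inside its column, from row i+1
   to row i (resp. back), and on cb(lambda) the two are mutually inverse
   partial maps; this gives (2).  Each f_i removes one unit from the first i
   rows and does not change the mass of the first k rows for k <> i, so the
   multiplicity of i in an f-word from k_lambda to e_A is a mass difference
   determined by A; this gives (3).  For (1), let A <> D_lambda and let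
   a_ij > 0 (i <> j) be an off-diagonal entry in the leftmost possible column.
   The earlier columns are diagonal, with positive entries since
   lambda is in Lambda^bullet; this forces i > j and row i-1 to live in
   column j, so e_(i-1) keeps A in cb(lambda) while lowering
   sum_a a * ro(A)_a, and we conclude by induction on this quantity. *)

Section ZeroSchurStandardModule.
Variable n : nat.
Local Notation mat := 'M[nat]_n.
Implicit Types (lam : ncomp n) (A B C D : mat).

Definition support_monotone A :=
  forall i j i' j', 0 < A i j -> 0 < A i' j' -> i' <= i -> j' <= j.

Lemma col_block_diagP A : reflect (support_monotone A) (col_block_diag A).
Proof.
apply: (iffP forallP) => [cbA i j i' j' Aij Ai'j' le_i'i | monA i].
  rewrite leqNgt; apply/negP => lt_jj'.
  have /forallP/(_ j)/implyP/(_ Aij)/forallP/(_ i')/forallP/(_ j')/implyP := cbA i.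
  by rewrite le_i'i lt_jj' => /(_ isT)/eqP Ai'j'0; rewrite Ai'j'0 in Ai'j'.
apply/forallP => j; apply/implyP => Aij; apply/forallP => i'; apply/forallP => s.
apply/implyP => /andP [le_i'i lt_js]; rewrite eqn0Ngt; apply/negP => Ai's.
by have := monA _ _ _ _ Aij Ai's le_i'i; rewrite leqNgt lt_js.
Qed.

Lemma in_cb_monotone lam A : in_cb lam A -> support_monotone A.
Proof. by case/andP => /col_block_diagP. Qed.

Lemma support_row_pred1 A (a p : 'I_n) : support_monotone A -> 0 < A a p ->
  forall b, (0 < A a b) = (b == p).
Proof.
move=> monA Aap b; apply/idP/eqP => [Aab | -> //]; apply: val_inj; apply/eqP.
by rewrite eqn_leq (monA _ _ _ _ Aap Aab) ?(monA _ _ _ _ Aab Aap).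
Qed.

Definition move_unit A (s d p : 'I_n) : mat :=
  \matrix_(a, b) (if b == p then
                    (if a == d then A a b + 1 else if a == s then A a b - 1 else A a b)
                  else A a b).

Lemma move_unitE A (s d p a b : 'I_n) : s != d -> 0 < A s p ->
  move_unit A s d p a b + ((a == s) && (b == p)) = A a b + ((a == d) && (b == p)).
Proof.
move=> sd Asp; rewrite mxE; case: (eqVneq b p) => [->|_]; rewrite ?andbF ?andbT //.
case: (eqVneq a d) => [->|_]; first by rewrite eq_sym (negbTE sd); lia.
by case: (eqVneq a s) => [->|//]; lia.
Qed.

Lemma move_unitK A (s d p : 'I_n) : s != d -> 0 < A s p ->
  move_unit (move_unit A s d p) d s p = A.
Proof.
move=> sd Asp; apply/matrixP => a b; rewrite !mxE.
case: (eqVneq b p) => [->|//].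
case: (eqVneq a s) => [->|_]; first by rewrite (negbTE sd); lia.
by case: (eqVneq a d) => [->|//]; lia.
Qed.

Definition mass (W : 'I_n -> 'I_n -> nat) A := \sum_a \sum_b W a b * A a b.

Lemma mass_move_unit W A (s d p : 'I_n) : s != d -> 0 < A s p ->
  mass W (move_unit A s d p) + W s p = mass W A + W d p.
Proof.
move=> sd Asp.
have mass_point x y : \sum_a \sum_b W a b * ((a == x) && (b == y)) = W x y.
  rewrite (bigD1 x) //= [X in _ + X]big1 => [|a /negbTE ax]; last first.
    by rewrite big1 // => b _; rewrite ax muln0.
  rewrite addn0 (bigD1 y) //= !eqxx muln1 big1 ?addn0 // => b /negbTE ->.
  by rewrite andbF muln0.
rewrite /mass -(mass_point s p) -(mass_point d p) -!big_split.
apply: eq_bigr => a _; rewrite -!big_split; apply: eq_bigr => b _ /=.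
by rewrite -!mulnDr move_unitE.
Qed.

Lemma co_mass A j : co A j = mass (fun _ b => b == j) A.
Proof.
rewrite ffunE; apply: eq_bigr => a _.
by rewrite (bigD1 j) //= eqxx mul1n big1 ?addn0 // => b /negbTE ->.
Qed.

Lemma co_move_unit A (s d p : 'I_n) : s != d -> 0 < A s p ->
  co (move_unit A s d p) = co A.
Proof.
move=> sd Asp; apply/ffunP => j; rewrite !co_mass; apply/eqP.
by rewrite -(eqn_add2r (p == j)) (mass_move_unit _ sd Asp).
Qed.

Lemma support_monotone_move A (u v p : 'I_n) :
  support_monotone A -> u.+1 = v :> nat -> 0 < A v p ->
  (forall c, 0 < A u c -> c = p) -> support_monotone (move_unit A v u p).
Proof.
move=> monA uv Avp row_u.
have supp a b : 0 < move_unit A v u p a b -> 0 < A a b \/ (a = u /\ b = p).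
  rewrite mxE; case: (eqVneq b p) => [->|_]; last by left.
  by case: (eqVneq a u) => [->|_]; [right | case: (a == v); left; lia].
have compat a b : 0 < A a b -> (a <= u -> b <= p) /\ (u <= a -> p <= b).
  move=> Aab; case: (ltngtP a u) => [lt_au|lt_ua|/val_inj au].
  - by split=> // _; apply: (monA v p a b) => //; lia.
  - by split=> // _; apply: (monA a b v p) => //; lia.
  - by move: Aab; rewrite au => /row_u ->.
move=> i j i' j' /supp [Aij|[-> ->]] /supp [Ai'j'|[-> ->]] le_i'i //.
- exact: monA Aij Ai'j' le_i'i.
- exact: (compat _ _ Aij).2.
- exact: (compat _ _ Ai'j').1.
Qed.

Lemma in_cb_move_unit lam A (u v p : 'I_n) : in_cb lam A -> u.+1 = v :> nat ->
  0 < A v p -> (forall c, 0 < A u c -> c = p) -> in_cb lam (move_unit A v u p).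
Proof.
move=> cbA uv Avp row_u; have vu : v != u by apply/eqP => vu; rewrite vu in uv; lia.
apply/andP; split.
  by apply/col_block_diagP; apply: support_monotone_move (in_cb_monotone cbA) uv Avp row_u.
by rewrite co_move_unit //; case/andP: cbA.
Qed.

Definition transfer (s d : 'I_n) A : option mat :=
  omap (move_unit A s d) [pick p | 0 < A s p].

Lemma transfer_pos A (s d p : 'I_n) : support_monotone A -> 0 < A s p ->
  transfer s d A = Some (move_unit A s d p).
Proof.
move=> monA Asp; rewrite /transfer; case: pickP => [q|/(_ p)]; last by rewrite Asp.
by rewrite (support_row_pred1 monA Asp) => /eqP ->.
Qed.

Lemma transferK s d A B : s != d -> support_monotone B ->
  transfer s d A = Some B -> transfer d s B = Some A.
Proof.
move=> sd monB; rewrite {1}/transfer; case: pickP => //= p Asp [EB]; subst B.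
have Mdp : 0 < move_unit A s d p d p by rewrite mxE !eqxx addn1.
by rewrite (transfer_pos _ monB Mdp) move_unitK.
Qed.

Lemma transfer_inv s d A B : s != d -> support_monotone A -> support_monotone B ->
  transfer s d A = Some B <-> transfer d s B = Some A.
Proof. by move=> sd monA monB; split; apply: transferK; rewrite // eq_sym. Qed.

Lemma mass_transfer (w : 'I_n -> nat) s d A B : s != d -> transfer s d A = Some B ->
  mass (fun a _ => w a) B + w s = mass (fun a _ => w a) A + w d.
Proof.
by move=> sd; rewrite /transfer; case: pickP => //= p Asp [<-]; apply: mass_move_unit.
Qed.

Lemma rowsumE A (a : 'I_n) : rowsum A a = \sum_b A a b.
Proof. by apply: eq_bigr => b _; rewrite /rowent (big_pred1 a). Qed.

Lemma e_step_transfer A i (u v : 'I_n) : support_monotone A ->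
  u = i.-1 :> nat -> v = i :> nat -> e_step i A = transfer v u A.
Proof.
move=> monA Eu Ev; subst i; rewrite /e_step /transfer rowsumE.
case: pickP => [p Avp | Av0] /=; last first.
  by rewrite big1 // => b _; apply/eqP; rewrite eqn0Ngt Av0.
rewrite (bigD1 p) //= addn_gt0 Avp [\max_(j | _) _](big_pred1 p) => [|b]; last first.
  by rewrite /= /rowent (big_pred1 v) // (support_row_pred1 monA Avp).
by congr Some; apply/matrixP => a b; rewrite !mxE -Eu.
Qed.

Lemma f_step_transfer A i (u v : 'I_n) : support_monotone A ->
  u = i.-1 :> nat -> v = i :> nat -> u != v -> f_step i A = transfer u v A.
Proof.
move=> monA Eu Ev uv; rewrite /f_step /transfer -Eu rowsumE.
case: pickP => [p Aup | Au0] /=; last first.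
  by rewrite big1 // => b _; apply/eqP; rewrite eqn0Ngt Au0.
rewrite (bigD1 p) //= addn_gt0 Aup -[\big[minn/n]_(j < n | _) _]big_filter.
rewrite (@eq_filter _ _ (pred1 p)) => [|b]; last first.
  by rewrite /= /rowent (big_pred1 u) // (support_row_pred1 monA Aup).
rewrite filter_pred1_uniq ?index_enum_uniq ?mem_index_enum // big_cons big_nil.
rewrite (minn_idPl (ltnW (ltn_ord p))); congr Some; apply/matrixP => a b.
rewrite !mxE -Ev !(inj_eq val_inj); case: (b == p) => //.
by case: (eqVneq a u) => [->|//]; rewrite (negbTE uv).
Qed.

Lemma adjacent_rows i : 0 < i < n ->
  exists u v : 'I_n, [/\ u = i.-1 :> nat, v = i :> nat & u != v].
Proof.
case/andP => i_gt0 lt_in; have lt_i1n : i.-1 < n by lia.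
by exists (Ordinal lt_i1n), (Ordinal lt_in); split => //; apply/eqP => /(congr1 val) /=; lia.
Qed.

Lemma S_act_Some lam (step : mat -> option mat) A B :
  S_act lam step (Some A) = Some B <-> step A = Some B /\ in_cb lam B.
Proof.
rewrite /S_act; case: (step A) => [M|]; last by split=> [|[]].
case: ifP => cbM; last by split=> [//|[[<-]]]; rewrite cbM.
by split=> [[<-]|[[<-]]].
Qed.

Lemma S_act_cb lam (step : mat -> option mat) x B :
  S_act lam step x = Some B -> in_cb lam B.
Proof. by case: x => //= A; case: (step A) => // C; case: ifP => // cbC [<-]. Qed.

Lemma act_e_f lam i B C : 0 < i < n -> in_cb lam B -> in_cb lam C ->
  act_e lam i (Some B) = Some C <-> act_f lam i (Some C) = Some B.
Proof.
move=> /adjacent_rows [u [v [Eu Ev uv]]] cbB cbC.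
have [monB monC] := (in_cb_monotone cbB, in_cb_monotone cbC).
rewrite /act_e /act_f !S_act_Some (e_step_transfer monB Eu Ev).
rewrite (f_step_transfer monC Eu Ev uv) transfer_inv 1?eq_sym //.
by split=> -[].
Qed.

Lemma act_es_cons lam i s x : act_es lam (i :: s) x = act_e lam i (act_es lam s x).
Proof. by []. Qed.

Lemma act_fs_rev_cons lam i s x :
  act_fs_rev lam (i :: s) x = act_fs_rev lam s (act_f lam i x).
Proof. by []. Qed.

Lemma act_fs_rev_None lam s : act_fs_rev lam s None = None.
Proof. by elim: s. Qed.

Lemma act_es_cb lam s A B : in_cb lam A -> act_es lam s (Some A) = Some B -> in_cb lam B.
Proof. by case: s => [cbA [<-] // | i s _]; apply: S_act_cb. Qed.

Lemma act_es_fs lam s A C : good_indices n s -> in_cb lam A -> in_cb lam C ->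
  act_es lam s (Some A) = Some C <-> Some A = act_fs_rev lam s (Some C).
Proof.
elim: s C => [|i s IH] C; first by split => -[->].
rewrite act_es_cons act_fs_rev_cons => /andP [i_ok s_ok] cbA cbC; split.
  case E: (act_es lam s (Some A)) => [B|//]; have cbB := act_es_cb cbA E.
  by move/(act_e_f i_ok cbB cbC) ->; apply/IH.
case E: (act_f lam i (Some C)) => [B|]; last by rewrite act_fs_rev_None.
have cbB := S_act_cb E; move/(IH B s_ok cbA cbB) ->.
exact/(act_e_f i_ok cbB cbC).
Qed.

Lemma Dmat_cb lam : in_cb lam (Dmat lam).
Proof.
apply/andP; split.
  by apply/col_block_diagP => i j i' j'; rewrite !mxE; do 2![case: eqVneq => // <-].
apply/eqP/ffunP => j; rewrite !ffunE (bigD1 j) //= mxE eqxx big1 ?addn0 // => a.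
by rewrite mxE => /negbTE ->.
Qed.

Definition upper_mass (k : nat) A := mass (fun a _ => a < k) A.

Lemma upper_mass_act_f lam i k C B : 0 < i < n -> in_cb lam C ->
  act_f lam i (Some C) = Some B -> upper_mass k B + (i == k) = upper_mass k C.
Proof.
move=> /[dup] /andP [i_gt0 _] /adjacent_rows [u [v [Eu Ev uv]]] cbC /S_act_Some [fCB _].
rewrite (f_step_transfer (in_cb_monotone cbC) Eu Ev uv) in fCB.
by have := mass_transfer (fun a : 'I_n => a < k) uv fCB; rewrite /upper_mass Eu Ev; lia.
Qed.

Lemma upper_mass_act_fs lam s D A k : good_indices n s -> in_cb lam D ->
  act_fs_rev lam s (Some D) = Some A -> upper_mass k A + count_mem k s = upper_mass k D.
Proof.
elim: s D => [|i s IH] D; first by move=> _ _ [->]; rewrite addn0.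
rewrite act_fs_rev_cons => /andP [i_ok s_ok] cbD.
case E: (act_f lam i (Some D)) => [B|]; last by rewrite act_fs_rev_None.
move/(IH B s_ok (S_act_cb E)); rewrite -(upper_mass_act_f k i_ok cbD E) /=; lia.
Qed.

Lemma act_fs_perm_eq lam s t A : good_indices n s -> good_indices n t ->
  act_fs_rev lam s (kbar lam) = Some A -> act_fs_rev lam t (kbar lam) = Some A ->
  perm_eq s t.
Proof.
move=> s_ok t_ok Es Et; apply/allP => k _; apply/eqP.
have := upper_mass_act_fs k s_ok (Dmat_cb lam) Es.
have := upper_mass_act_fs k t_ok (Dmat_cb lam) Et; lia.
Qed.

Lemma diag_eq_Dmat A : (forall i j, i != j -> A i j = 0) -> A = Dmat (co A).
Proof.
move=> offdiag0; apply/matrixP => i j; rewrite mxE.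
case: eqVneq => [<-|/offdiag0 //]; rewrite ffunE (bigD1 i) //= big1 ?addn0 //.
by move=> a /offdiag0.
Qed.

Lemma first_offdiag_column A : A != Dmat (co A) ->
  exists i j, [/\ i != j, 0 < A i j &
               forall j' i' : 'I_n, j' < j -> i' != j' -> A i' j' = 0].
Proof.
move=> neqAD; pose offdiag j := [exists i, (i != j) && (0 < A i j)].
have [j0 off_j0] : exists j0, offdiag j0.
  apply/existsP; apply: contraNT neqAD => /existsPn diagA; apply/eqP/diag_eq_Dmat.
  move=> i j ij; have /existsPn/(_ i) := diagA j.
  by rewrite ij /= -leqNgt leqn0 => /eqP.
case: (arg_minnP val off_j0) => j /existsP [i /andP [ij Aij]] jmin.
exists i, j; split=> // j' i' lt_j'j i'j'; apply/eqP; rewrite eqn0Ngt.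
apply: contraTN lt_j'j => Ai'j'; rewrite -leqNgt; apply: jmin.
by apply/existsP; exists i'; rewrite i'j'.
Qed.

Lemma e_step_toward_Dmat lam r A : in_Lambda_bullet r lam -> in_cb lam A ->
  A != Dmat lam -> exists i C, 0 < i < n /\ act_e lam i (Some A) = Some C.
Proof.
move=> [_ bullet] cbA; have monA := in_cb_monotone cbA.
have /andP [_ /eqP coA] := cbA; rewrite -{1}coA.
move=> /first_offdiag_column [i [j [ij Aij diag_left]]].
have diag_pos (j' : 'I_n) : j' < j -> 0 < A j' j'.
  move=> lt_j'j; have -> : A j' j' = lam j'.
    by rewrite -coA ffunE (bigD1 j') //= big1 ?addn0 // => a /diag_left ->.
  rewrite lt0n; apply: contraTneq (Aij) => /(bullet j' j (ltnW lt_j'j)) lamj0.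
  by rewrite -leqNgt -lamj0 -coA ffunE (bigD1 i) //= leq_addr.
have lt_ji : j < i.
  rewrite ltn_neqAle eq_sym ij leqNgt; apply: contraTN (Aij) => lt_ij.
  by rewrite (support_row_pred1 monA (diag_pos _ lt_ij)) -(inj_eq val_inj) gtn_eqF.
have [u Eu] : exists u : 'I_n, u.+1 = i :> nat.
  have lt_i1n : i.-1 < n by rewrite (leq_ltn_trans (leq_pred i)).
  by exists (Ordinal lt_i1n); rewrite /= prednK // (leq_ltn_trans (leq0n j)).
have row_u (c : 'I_n) : 0 < A u c -> c = j.
  move=> Auc; have le_cj : c <= j by apply: monA Aij Auc _; rewrite -Eu.
  apply: val_inj; apply/eqP; rewrite eqn_leq le_cj leqNgt; apply: contraTN Auc => lt_cj.
  by rewrite diag_left // -(inj_eq val_inj) gtn_eqF // -ltnS Eu (leq_ltn_trans lt_cj lt_ji).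
exists i, (move_unit A i u j); split; first by rewrite ltn_ord (leq_ltn_trans (leq0n j)).
apply/S_act_Some; split; last exact: in_cb_move_unit.
by rewrite (e_step_transfer (u := u) (v := i) monA) ?(transfer_pos _ monA Aij) // -Eu.
Qed.

Definition height A := mass (fun a _ => a : nat) A.

Lemma height_act_e lam i A C : 0 < i < n -> in_cb lam A ->
  act_e lam i (Some A) = Some C -> height C < height A.
Proof.
move=> /[dup] /andP [i_gt0 _] /adjacent_rows [u [v [Eu Ev uv]]] cbA /S_act_Some [eAC _].
rewrite (e_step_transfer (in_cb_monotone cbA) Eu Ev) in eAC.
have vu : v != u by rewrite eq_sym.
by have := mass_transfer (@nat_of_ord n) vu eAC; rewrite /height Eu Ev; lia.
Qed.

Lemma act_es_to_kbar lam r A : in_Lambda_bullet r lam -> in_cb lam A ->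
  exists2 s, good_indices n s & act_es lam s (ebar A) = kbar lam.
Proof.
move=> bullet; have [N] := ubnP (height A); elim: N A => // N IH A ltAN cbA.
have [-> | neqAD] := eqVneq A (Dmat lam); first by exists [::].
have [i [C [i_ok eAC]]] := e_step_toward_Dmat bullet cbA neqAD.
have [s s_ok sC] := IH C (leq_trans (height_act_e i_ok cbA eAC) ltAN) (S_act_cb eAC).
exists (rcons s i); first by rewrite /good_indices all_rcons i_ok.
by rewrite /act_es foldr_rcons eAC.
Qed.

End ZeroSchurStandardModule.

Theorem mainTheorem3 (n r : nat) (lam : ncomp n) (A : 'M[nat]_n) :
  in_Lambda_bullet r lam ->
  in_cb lam A ->
  (exists s : seq nat,
      good_indices n s /\ act_es lam s (ebar A) = kbar lam) /\
  (forall s : seq nat, good_indices n s ->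
      (act_es lam s (ebar A) = kbar lam <-> ebar A = act_fs_rev lam s (kbar lam))) /\
  (forall s t : seq nat, good_indices n s -> good_indices n t ->
      ebar A = act_fs_rev lam s (kbar lam) ->
      ebar A = act_fs_rev lam t (kbar lam) ->
      perm_eq s t /\ size s = size t).
Proof.
move=> bullet cbA; split; [|split].
- by have [s] := act_es_to_kbar bullet cbA; exists s.
- by move=> s s_ok; apply: act_es_fs (Dmat_cb lam).
- move=> s t s_ok t_ok Es Et.
  have st := act_fs_perm_eq s_ok t_ok (esym Es) (esym Et).
  by split; last exact: perm_size.
Qed.
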